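(* Fix a utility call $\ell$ with anchor interval $[\underline u^{(a_\ell)},\overline u^{(a_\ell)}]$ and let $w_a:=\mathrm{logit}(\overline u^{(a_\ell)})-\mathrm{logit}(\underline u^{(a_\ell)})$. Assume the true comparison probability satisfies $p_\ell\in[\kappa,1-\kappa]$ for some $\kappa\in(0,\tfrac12]$, let $\eta>0$ satisfy $w_a<8\eta$, and choose $$K_\ell\ge\max\Big\{\frac{8\log(2/\delta_\ell)}{\kappa^2},\ \frac{32\log(2/\delta_\ell)}{\kappa^2(8\eta-w_a)^2}\Big\}.$$ Then on the event that $u^{(a_\ell)}(\overline y^{(a_\ell)})\in[\underline u^{(a_\ell)},\overline u^{(a_\ell)}]$ and $p_\ell\in[p^-_\ell,p^+_\ell]$, the transported interval satisfies $\overline u^{(i_\ell)}-\underline u^{(i_\ell)}\le2\eta$.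
   Context: Bradley–Terry utility model: each task–incumbent pair $(i,z)$ has a score $\theta^{(i)}(z)\in\mathbb R$, normalized so that a fixed reference has score $0$, and the utility is $u^{(i)}(z)=\sigma(\theta^{(i)}(z))$ with $\sigma(x)=1/(1+e^{-x})$, $\mathrm{logit}(p)=\log(p/(1-p))$ (with $\mathrm{logit}(0)=-\infty$, $\mathrm{logit}(1)=+\infty$, $\sigma(-\infty)=0$, $\sigma(+\infty)=1$). At utility call $\ell$, candidate task $i_\ell$ with incumbent $z$ is compared with anchor task $a_\ell$ with incumbent $z'$; the true comparison probability is $p_\ell=\sigma(\theta^{(i_\ell)}(z)-\theta^{(a_\ell)}(z'))$. One draws $K_\ell$ votes $b_{\ell,k}\in\{0,1\}$, conditionally independent with mean $p_\ell$; $\hat p_\ell:=K_\ell^{-1}\sum_kb_{\ell,k}$. With failure budget $\delta_\ell\in(0,1)$, let $\theta_p:=\sqrt{\log(2/\delta_\ell)/(2K_\ell)}$, $p^-_\ell:=\mathrm{clip}_{[0,1]}(\hat p_\ell-\theta_p)$, $p^+_\ell:=\mathrm{clip}_{[0,1]}(\hat p_\ell+\theta_p)$. Given an anchor interval $[\underline u^{(a_\ell)},\overline u^{(a_\ell)}]$, the transported interval is $\underline u^{(i_\ell)}:=\sigma(\mathrm{logit}(\underline u^{(a_\ell)})+\mathrm{logit}(p^-_\ell))$, $\overline u^{(i_\ell)}:=\sigma(\mathrm{logit}(\overline u^{(a_\ell)})+\mathrm{logit}(p^+_\ell))$. *)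

From HB Require Import structures.
From mathcomp Require Import all_boot all_order all_algebra.
From mathcomp Require Import all_classical all_reals all_analysis.
Set Implicit Arguments. Unset Strict Implicit. Unset Printing Implicit Defensive.
Import Order.TTheory GRing.Theory Num.Theory.
Local Open Scope ring_scope.

Definition sigma {R : realType} (x : R) : R := 1 / (1 + expR (- x)).

(* logit with values in the extended reals: logit 0 = -oo, logit 1 = +oo
   (for arguments outside [0,1] we extend by -oo below 0 and +oo above 1;
   in the theorem logit is only applied to clipped probabilities and to
   anchor endpoints). *)
Definition logit {R : realType} (p : R) : \bar R :=
  if p <= 0 then -oo%E
  else if 1 <= p then +oo%E
  else (ln (p / (1 - p)))%:E.

Definition sigmaE {R : realType} (x : \bar R) : R :=
  match x with
  | x%:E => sigma x
  | +oo%E => 1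
  | -oo%E => 0
  end.

Definition clip01 {R : realType} (x : R) : R := Num.min 1 (Num.max 0 x).

Definition phat {R : realType} (K : nat) (b : 'I_K -> bool) : R :=
  (\sum_(k < K) (b k : nat))%:R / K%:R.

Definition theta_p {R : realType} (K : nat) (delta : R) : R :=
  Num.sqrt (ln (2 / delta) / (2 * K%:R)).

Definition p_lo {R : realType} (K : nat) (b : 'I_K -> bool) (delta : R) : R :=
  clip01 (phat b - theta_p K delta).
Definition p_hi {R : realType} (K : nat) (b : 'I_K -> bool) (delta : R) : R :=
  clip01 (phat b + theta_p K delta).

Definition u_lo_transport {R : realType} (ua_lo : R) (pm : R) : R :=
  sigmaE (logit ua_lo + logit pm)%E.
Definition u_hi_transport {R : realType} (ua_hi : R) (pp : R) : R :=
  sigmaE (logit ua_hi + logit pp)%E.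

From HB Require Import structures.
From mathcomp Require Import all_boot all_order all_algebra.
From mathcomp Require Import all_classical all_reals all_analysis.
From mathcomp Require Import ring lra.
Import Order.TTheory GRing.Theory Num.Theory.
Local Open Scope ring_scope.

(* sigma is 1/4-Lipschitz, so it suffices to bound the logit width of the
   transported interval by 8 eta.  That width is the anchor width w_a plus
   logit p^+ - logit p^-.  The first sample-size condition makes the clipped
   confidence interval, of length at most 2 theta_p, stay in
   [kappa/2, 1 - kappa/2], where logit is (4/kappa)-Lipschitz; the second
   one makes 2 theta_p * 4/kappa at most 8 eta - w_a. *)

Section Sigma.
Context {R : realType}.
Implicit Types x y c : R.

Lemma sigma_gt0 x : 0 < sigma x.
Proof. by rewrite /sigma divr_gt0 // ltr_pwDr ?expR_gt0. Qed.

Lemma sigma_lt1 x : sigma x < 1.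
Proof. rewrite /sigma ltr_pdivrMr; have := expR_gt0 (- x); lra. Qed.

Lemma ler_sigma : {homo @sigma R : x y / x <= y}.
Proof.
move=> x y xy; have ex := expR_gt0 (- x); have ey := expR_gt0 (- y).
rewrite /sigma !div1r lef_pV2 ?posrE; try lra.
by rewrite lerD2l ler_expR lerN2.
Qed.

Lemma is_derive_sigma c :
  is_derive c 1 (@sigma R) (expR (- c) / (1 + expR (- c)) ^+ 2).
Proof.
have -> : @sigma R = (fun y => (1 + expR (- y))^-1).
  by apply: funext => y; rewrite /sigma div1r.
have ne : 1 + expR (- c) != 0 by have := expR_gt0 (- c); lra.
have dexpN : is_derive c 1 (expR \o -%R) (expR (- c) * (-1)).
  exact: is_derive1_comp.
have dden : is_derive c 1 (fun y : R => 1 + expR (- y)) (0 + expR (- c) * (-1)).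
  exact: is_deriveD (is_derive_cst _ _ _) dexpN.
apply: (is_derive_eq (@is_deriveV R (fun y : R => 1 + expR (- y)) c _ 1 ne dden)).
rewrite /GRing.scale /=; field; exact: ne.
Qed.

(* e / (1 + e)^2 <= 1/4 is (1 - e)^2 >= 0. *)
Lemma sigma_derive_le c : expR (- c) / (1 + expR (- c)) ^+ 2 <= 1 / 4.
Proof.
have e0 := expR_gt0 (- c); move: (expR (- c)) e0 => e e0.
rewrite ler_pdivrMr; last nra.
have := sqr_ge0 (1 - e); nra.
Qed.

Lemma sigma_sub_le x y c : 0 <= c -> x - y <= c -> sigma x - sigma y <= c / 4.
Proof.
move=> c0 xyc; case: (ltrP y x) => [yx|xy]; last first.
  by have := ler_sigma _ _ xy; lra.
have [|z _ ->] := MVT yx (fun z _ => is_derive_sigma z).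
  by apply: derivable_within_continuous => z _; case: (is_derive_sigma z).
have := sigma_derive_le z; have : 0 <= x - y by lra.
move: (expR (- z) / _) => d; nra.
Qed.

End Sigma.

Section Logit.
Context {R : realType}.
Implicit Types u v m : R.

Definition logitr u : R := ln (u / (1 - u)).

Lemma logitE u : 0 < u < 1 -> logit u = (logitr u)%:E.
Proof. by move=> /andP[u0 u1]; rewrite /logit !leNgt u0 u1. Qed.

Lemma logitB_neq_pinfty u v : 0 < v -> u < 1 ->
  (logit v - logit u)%E != +oo%E -> 0 < u /\ v < 1.
Proof.
move=> v0 u1; rewrite /logit (leNgt v) v0 (leNgt 1 u) u1 /=.
case: (leP u 0) => [//|u0]; case: (leP 1 v) => //= v1 _; by split.
Qed.

Lemma ln_le_subr1 (x : R) : 0 < x -> ln x <= x - 1.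
Proof. by move=> x0; have := @le_ln1Dx R (x - 1); rewrite subrKC; apply; lra. Qed.

(* Both ln-differences in logit u - logit v are bounded by ln a - ln b <= a/b - 1. *)
Lemma logitr_sub_le v u : 0 < v -> v <= u -> u < 1 ->
  logitr u - logitr v <= (u - v) * (v^-1 + (1 - u)^-1).
Proof.
move=> v0 vu u1.
have u0 : 0 < u by lra.
rewrite /logitr !ln_div ?posrE ?subr_gt0 //; try lra.
have := ln_le_subr1 _ (divr_gt0 u0 v0); rewrite ln_div ?posrE //.
have := @ln_le_subr1 ((1 - v) / (1 - u)) ltac:(rewrite divr_gt0 //; lra).
rewrite ln_div ?posrE; try lra.
have -> : (1 - v) / (1 - u) - 1 = (u - v) * (1 - u)^-1 by field; lra.
have -> : u / v - 1 = (u - v) * v^-1 by field; lra.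
lra.
Qed.

Lemma logitr_sub_le_margin m v u : 0 < m -> m <= v -> v <= u -> u <= 1 - m ->
  logitr u - logitr v <= (u - v) * (2 / m).
Proof.
move=> m0 mv vu um.
apply: le_trans (logitr_sub_le v u (lt_le_trans m0 mv) vu _) _; first lra.
apply: ler_wpM2l; first lra.
have : v^-1 <= m^-1 by rewrite lef_pV2 ?posrE //; lra.
have : (1 - u)^-1 <= m^-1 by rewrite lef_pV2 ?posrE //; lra.
lra.
Qed.

End Logit.

Section ConfidenceInterval.
Context {R : realType}.

Lemma clip01_sub_le (a b : R) : a <= b -> clip01 b - clip01 a <= b - a.
Proof.
rewrite /clip01 !maxEle => ab.
case: (leP 0 a) => a0; case: (leP 0 b) => b0 /=; rewrite !minEle ?ler10 /=;
  try case: (leP 1 a) => a1; try case: (leP 1 b) => b1; lra.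
Qed.

Lemma theta_p_ge0 (K : nat) (delta : R) : 0 <= theta_p K delta.
Proof. exact: sqrtr_ge0. Qed.

(* K = 0 is harmless: then theta_p K delta = sqrt (x / 0) = 0. *)
Lemma theta_p_le (K : nat) (delta t : R) : 0 < t ->
  ln (2 / delta) / (2 * t ^+ 2) <= K%:R -> theta_p K delta <= t.
Proof.
move=> t0 hK; rewrite /theta_p -(ger0_norm (ltW t0)) -sqrtr_sqr.
rewrite ler_sqrt ?sqr_ge0 //.
have [->|K0] := eqVneq K 0%N; first by rewrite mulr0 invr0 mulr0 sqr_ge0.
have K0' : 0 < K%:R :> R by rewrite ltr0n lt0n.
rewrite ler_pdivrMr ?mulr_gt0 //.
by rewrite ler_pdivrMr ?mulr_gt0 ?exprn_gt0 // in hK; lra.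
Qed.

Lemma p_hi_sub_p_lo (K : nat) (b : 'I_K -> bool) (delta : R) :
  p_hi b delta - p_lo b delta <= 2 * theta_p K delta.
Proof.
have th0 := theta_p_ge0 K delta; rewrite /p_hi /p_lo.
by have := @clip01_sub_le (phat b - theta_p K delta) (phat b + theta_p K delta); lra.
Qed.

End ConfidenceInterval.

Theorem theoremC3 (R : realType)
  (theta_i theta_a : R)          (* theta^(i_l)(z), theta^(a_l)(z') *)
  (ua_lo ua_hi : R)              (* anchor interval *)
  (K : nat) (b : 'I_K -> bool)   (* the K_l votes *)
  (delta kappa eta : R) :
  0 < delta < 1 ->
  0 < kappa <= 1 / 2 ->
  kappa <= sigma (theta_i - theta_a) <= 1 - kappa ->
  0 < eta ->
  (logit ua_hi - logit ua_lo < (8 * eta)%:E)%E ->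
  8 * ln (2 / delta) / kappa ^+ 2 <= K%:R ->
  32 * ln (2 / delta) /
    (kappa ^+ 2 * (8 * eta - fine (logit ua_hi - logit ua_lo)%E) ^+ 2) <= K%:R ->
  (* the event *)
  ua_lo <= sigma theta_a <= ua_hi ->
  p_lo b delta <= sigma (theta_i - theta_a) <= p_hi b delta ->
  u_hi_transport ua_hi (p_hi b delta) - u_lo_transport ua_lo (p_lo b delta)
    <= 2 * eta.
Proof.
move=> _ /andP[k0 _] /andP[pk1 pk2] e0 hw hK1 hK2 /andP[ua1 ua2] /andP[pl pu].
have sa0 := sigma_gt0 theta_a; have sa1 := sigma_lt1 theta_a.
have [lo0 hi1] : 0 < ua_lo /\ ua_hi < 1.
  by apply: logitB_neq_pinfty; [lra | lra | apply/negbT/lt_eqF/(lt_trans hw); exact: ltry].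
rewrite !logitE -?EFinB ?lte_fin /= in hw hK2; try lra.
set w := logitr ua_hi - logitr ua_lo in hw hK2.
set th := theta_p K delta.
have thk : th <= kappa / 4.
  apply: theta_p_le; first lra.
  suff -> : ln (2 / delta) / (2 * (kappa / 4) ^+ 2) =
      8 * ln (2 / delta) / kappa ^+ 2 by [].
  by field; lra.
have thw : th <= kappa * (8 * eta - w) / 8.
  apply: theta_p_le; first by rewrite !divr_gt0 ?mulr_gt0 //; lra.
  suff -> : ln (2 / delta) / (2 * (kappa * (8 * eta - w) / 8) ^+ 2) =
      32 * ln (2 / delta) / (kappa ^+ 2 * (8 * eta - w) ^+ 2) by [].
  by field; lra.
have spread : p_hi b delta - p_lo b delta <= 2 * th := p_hi_sub_p_lo K b delta.
have dlogit : logitr (p_hi b delta) - logitr (p_lo b delta) <= 8 * eta - w.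
  apply: le_trans (@logitr_sub_le_margin _ (kappa / 2) _ _ _ _ _ _) _; try lra.
  rewrite (_ : 2 / (kappa / 2) = 4 / kappa); last by field; lra.
  rewrite mulrA ler_pdivrMr //; lra.
rewrite /u_hi_transport /u_lo_transport !logitE; try lra.
rewrite -!EFinD /= (_ : 2 * eta = 8 * eta / 4); last lra.
apply: sigma_sub_le; rewrite /w in dlogit; lra.
Qed.
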